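(* Let $H_1$ and $H_2$ be graphs. If $\operatorname{obs}^\ast(H_1)\cap\operatorname{obs}^\ast(H_2)\ne\varnothing$ (up to isomorphism), then $H_1\cong H_2$.
   Context: All graphs are finite, simple and loopless. A full-homomorphism $\varphi\colon G\to H$ is a map $V(G)\to V(H)$ such that for all $x,y\in V(G)$, $xy\in E(G)$ if and only if $\varphi(x)\varphi(y)\in E(H)$. A full $H$-colouring of $G$ is a full-homomorphism $G\to H$. A minimal $H$-obstruction is a graph $G$ that admits no full $H$-colouring while every proper induced subgraph of $G$ admits one; $\operatorname{obs}(H)$ denotes the set of minimal $H$-obstructions (up to isomorphism), and $\operatorname{obs}^\ast(H)$ the set of minimal $H$-obstructions on exactly $|V(H)|+1$ vertices. *)

From mathcomp Require Import all_boot.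
Set Implicit Arguments. Unset Strict Implicit. Unset Printing Implicit Defensive.

Record graph := Graph {
  vertex :> finType;
  adj : rel vertex;
  adj_sym : symmetric adj;
  adj_irr : irreflexive adj }.

Definition full_hom (G H : graph) (phi : G -> H) : Prop :=
  forall x y : G, adj (phi x) (phi y) = adj x y.

Definition full_colourable (G H : graph) : Prop :=
  exists phi : G -> H, full_hom phi.

Definition induced (G : graph) (S : {set G}) : graph :=
  @Graph {x : G | x \in S} (fun x y => adj (val x) (val y))
    (fun x y => adj_sym (val x) (val y)) (fun x => adj_irr (val x)).

Definition minimal_obstruction (H G : graph) : Prop :=
  ~ full_colourable G H /\
  forall S : {set G}, S \proper [set: G] -> full_colourable (induced S) H.

Definition in_obs_star (H G : graph) : Prop :=
  minimal_obstruction H G /\ #|G| = #|H|.+1.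

Definition graph_iso (G H : graph) : Prop :=
  exists phi : G -> H, bijective phi /\ full_hom phi.

From mathcomp Require Import all_boot.

Set Implicit Arguments.
Unset Strict Implicit.
Unset Printing Implicit Defensive.

(* Minimal obstructions are twin-free, and a twin-free graph always has a vertex
   whose deletion leaves it twin-free (a parity argument over GF(2)). If G is in
   obs^*(H) and G - v is twin-free, the full H-colouring of G - v is injective,
   hence bijective by counting, so H is isomorphic to G - v. An isomorphism
   G1 -> G2 carries such a vertex v to one of G2, so H1, G1 - v, G2 - f v and H2
   are all isomorphic. *)

Definition twin_free (G : graph) : Prop :=
  forall u w : G, (forall z, adj u z = adj w z) -> u = w.

Lemma graph_iso_sym (G H : graph) : graph_iso G H -> graph_iso H G.
Proof.
move=> [f [[g fK gK] ff]]; exists g; split; first by exists f.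
by move=> a b; rewrite -ff !gK.
Qed.

Lemma graph_iso_trans (G H K : graph) :
  graph_iso G H -> graph_iso H K -> graph_iso G K.
Proof.
move=> [f [fb ff]] [g [gb gf]]; exists (g \o f); split.
  exact: bij_comp.
by move=> x y; rewrite /= gf ff.
Qed.

Lemma full_hom_inj (G H : graph) (phi : G -> H) :
  twin_free G -> full_hom phi -> injective phi.
Proof. by move=> tfG fphi x y e; apply: tfG => z; rewrite -!fphi e. Qed.

Lemma graph_iso_twin_free (G H : graph) :
  graph_iso G H -> twin_free G -> twin_free H.
Proof.
move=> [f [[g fK gK] ff]] tfG u w twin.
rewrite -[u]gK -[w]gK; congr f; apply: tfG => z.
by rewrite -[LHS]ff -[RHS]ff !gK twin.
Qed.

Lemma induced_iso (G H : graph) (f : G -> H) (S : {set G}) (T : {set H}) :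
  bijective f -> full_hom f -> (forall x, (f x \in T) = (x \in S)) ->
  graph_iso (induced S) (induced T).
Proof.
move=> [g fK gK] ff fST.
have fS (x : induced S) : f (val x) \in T by rewrite fST (valP x).
have gT (y : induced T) : g (val y) \in S by rewrite -fST gK (valP y).
exists (fun x => Sub (f (val x)) (fS x) : induced T); split; last first.
  by move=> x y; rewrite /= ff.
exists (fun y => Sub (g (val y)) (gT y) : induced S) => [x | y];
  by apply: val_inj; rewrite /= ?fK ?gK.
Qed.

Lemma proper_setC1 (T : finType) (v : T) : [set~ v] \proper [set: T].
Proof. by rewrite properT; apply/eqP => /setP/(_ v); rewrite !inE eqxx. Qed.

Lemma full_colourable_twin_deletion (G H : graph) (u w : G) :
  u != w -> (forall z, adj u z = adj w z) ->
  full_colourable (induced [set~ u]) H -> full_colourable G H.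
Proof.
move=> uw twin [phi fphi].
have wS : w \in [set~ u] by rewrite in_setC1 eq_sym.
pose retract (z : G) : induced [set~ u] := insubd (Sub w wS) z.
have retract_val z : val (retract z) = if z == u then w else z.
  by rewrite val_insubd in_setC1; case: eqP.
exists (phi \o retract) => a b; rewrite /= fphi /= !retract_val.
case: (eqVneq a u) => [->|au]; case: (eqVneq b u) => [->|bu] //.
- by rewrite !adj_irr.
- by rewrite ![adj a _]adj_sym twin.
Qed.

Lemma minimal_obstruction_twin_free (H G : graph) :
  minimal_obstruction H G -> twin_free G.
Proof.
move=> [ncol min] u w twin; apply/eqP; apply: contraT => uw.
case: ncol; apply: full_colourable_twin_deletion uw twin _.
by apply: min; apply: proper_setC1.
Qed.

Section AdjacencyParity.

Variable G : graph.

(* The adjacency matrix of G over GF(2), acting on indicator vectors. *)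
Definition adj_parity (T : {ffun G -> bool}) : {ffun G -> bool} :=
  [ffun x => odd #|[set z | T z && adj x z]|].

Lemma adj_parity_diff (T : {ffun G -> bool}) (v x y : G) :
  (forall z, z != v -> adj x z = adj y z) -> adj x v != adj y v ->
  T v = (adj_parity T x != adj_parity T y).
Proof.
move=> agree xy_v.
have split_v u : #|[set z | T z && adj u z]| =
    (T v && adj u v) + #|[set z | (z != v) && T z && adj u z]|.
  rewrite (cardsD1 v) inE; congr (_ + _).
  by apply: eq_card => z; rewrite !inE andbA.
have same_off_v : #|[set z | (z != v) && T z && adj x z]| =
                  #|[set z | (z != v) && T z && adj y z]|.
  apply: eq_card => z; rewrite !inE.
  by case: (eqVneq z v) => //= zv; rewrite agree.
rewrite !ffunE !split_v same_off_v !oddD !oddb; move: xy_v (odd #|_|) => + k.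
by case: (T v); case: (adj x v); case: (adj y v); case: k.
Qed.

(* Twins p v, q v of G - v differ exactly at v, so T v can be read off
   adj_parity T, making adj_parity injective; the preimage of the all-ones
   vector then vanishes everywhere, yet the zero vector maps to zero. *)
Lemma twin_free_no_twins_off_every_vertex (x0 : G) (p q : G -> G) :
  twin_free G -> (forall v, p v != q v) ->
  ~ (forall v z, z != v -> adj (p v) z = adj (q v) z).
Proof.
move=> tfG pq_ne agree.
have pq_v v : adj (p v) v != adj (q v) v.
  apply: contra (pq_ne v) => /eqP same_v; apply/eqP/tfG => z.
  by case: (eqVneq z v) => [->|]; [exact: same_v | exact: agree].
have read_off v (T : {ffun G -> bool}) :
    T v = (adj_parity T (p v) != adj_parity T (q v)).
  exact: adj_parity_diff (agree v) (pq_v v).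
have /injF_bij [inv _ invK] : injective adj_parity.
  by move=> T1 T2 e; apply/ffunP => v; rewrite read_off e -read_off.
pose ones : {ffun G -> bool} := [ffun => true].
have inv_ones v : inv ones v = false by rewrite read_off invK !ffunE.
have := congr1 (fun T : {ffun G -> bool} => T x0) (invK ones).
rewrite !ffunE (_ : [set z | _] = set0) ?cards0 //.
by apply/setP => z; rewrite !inE inv_ones.
Qed.

End AdjacencyParity.

Lemma twin_free_deletion_exists (G : graph) :
  twin_free G -> 0 < #|G| -> exists v : G, twin_free (induced [set~ v]).
Proof.
move=> tfG /card_gt0P [x0 _].
pose twins_off v (xy : G * G) :=
  (xy.1 != xy.2) && [forall z, (z != v) ==> (adj xy.1 z == adj xy.2 z)].
case: (boolP [forall v, exists xy, twins_off v xy]) => [/forallP all_twins|].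
  have /fin_all_exists [pq pq_twins] : forall v, exists xy, twins_off v xy.
    by move=> v; apply/existsP; apply: all_twins.
  have pq_ne v : (pq v).1 != (pq v).2 by case/andP: (pq_twins v).
  case: (twin_free_no_twins_off_every_vertex x0 tfG pq_ne) => v z zv.
  case/andP: (pq_twins v) => _ /forallP/(_ z).
  by rewrite zv => /eqP.
case/forallPn => v /existsPn no_twins; exists v => a b twin; apply: val_inj.
apply/eqP; apply: contraT => ab; case/negP: (no_twins (val a, val b)).
rewrite /twins_off /= ab; apply/forallP => z; apply/implyP => zv.
rewrite -in_setC1 in zv; apply/eqP; exact: twin (Sub z zv).
Qed.

Lemma obs_star_deletion_iso (H G : graph) (v : G) :
  in_obs_star H G -> twin_free (induced [set~ v]) ->
  graph_iso (induced [set~ v]) H.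
Proof.
move=> [[_ min] cardG] tfGv.
have [phi fphi] := min [set~ v] (proper_setC1 v).
have card_Gv : #|H| <= #|induced [set~ v]|.
  by rewrite card_sig cardsC1 cardG.
exists phi; split=> //.
exact: inj_card_bij (full_hom_inj tfGv fphi) card_Gv.
Qed.

Theorem corollary3p6 (H1 H2 G1 G2 : graph) :
  in_obs_star H1 G1 -> in_obs_star H2 G2 -> graph_iso G1 G2 ->
  graph_iso H1 H2.
Proof.
move=> obs1 obs2 [f [fbij ff]].
have G1_gt0 : 0 < #|G1| by rewrite obs1.2.
have [v tfG1v] :=
  twin_free_deletion_exists (minimal_obstruction_twin_free obs1.1) G1_gt0.
have deletion_iso : graph_iso (induced [set~ v]) (induced [set~ f v]).
  apply: (induced_iso fbij ff) => x.
  by rewrite !in_setC1 (bij_eq fbij).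
have tfG2v := graph_iso_twin_free deletion_iso tfG1v.
apply: graph_iso_trans (graph_iso_sym (obs_star_deletion_iso obs1 tfG1v)) _.
exact: graph_iso_trans deletion_iso (obs_star_deletion_iso obs2 tfG2v).
Qed.
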